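(* Let $\mathcal{X}=\{1,\dots,n\}$ and $\pi$ a probability mass function on $\mathcal{X}$ with full support, ordered so that $\pi(1)\le\pi(2)\le\dots\le\pi(n)$. Fix $k\in\{1,\dots,n\}$ and let $(\mathcal{O}_i)_{i=1}^k$ be the partition with $\mathcal{O}_i=\{i\}$ for $1\le i\le k-1$ and $\mathcal{O}_k=\{k,k+1,\dots,n\}$. Then the Gibbs kernel $G_{\mathcal{O}}$ of $(\mathcal{O}_i)_{i=1}^k$ minimises $D^\pi_{KL}(G\|\Pi)$ among all Gibbs kernels with $k$ orbits: for any partition $(\mathcal{C}_i)_{i=1}^k$ of $\mathcal{X}$ into $k$ blocks, $D^\pi_{KL}(G_{\mathcal{O}}\|\Pi)\le D^\pi_{KL}(G_{\mathcal{C}}\|\Pi)$.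
   Context: For a partition $(\mathcal{C}_i)$ of $\mathcal{X}$ (the orbits of some group action), its Gibbs kernel is $G_{\mathcal{C}}(x,y)=\pi(y)/\pi(\mathcal{C}(x))$ if $y$ lies in the block $\mathcal{C}(x)$ containing $x$, and $0$ otherwise, where $\pi(A)=\sum_{z\in A}\pi(z)$. $\Pi$ is the matrix with all rows equal to $\pi$, and $D^\pi_{KL}(P\|Q)=\sum_{x,y}\pi(x)P(x,y)\log\frac{P(x,y)}{Q(x,y)}$ with $0\log(0/a)=0$. *)

From HB Require Import structures.
From mathcomp Require Import all_boot all_order all_algebra.
From mathcomp Require Import reals exp.
Set Implicit Arguments. Unset Strict Implicit. Unset Printing Implicit Defensive.
Import Order.TTheory GRing.Theory Num.Theory.
Local Open Scope ring_scope.

Definition pimass (R : realType) (n : nat) (pi : 'I_n -> R) (A : {set 'I_n}) : R :=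
  \sum_(z in A) pi z.

Definition gibbs_kernel (R : realType) (n : nat) (pi : 'I_n -> R)
  (P : {set {set 'I_n}}) (x y : 'I_n) : R :=
  if y \in pblock P x then pi y / pimass pi (pblock P x) else 0.

Definition Pi_kernel (R : realType) (n : nat) (pi : 'I_n -> R) (x y : 'I_n) : R := pi y.

Definition DKL (R : realType) (n : nat) (pi : 'I_n -> R) (P Q : 'I_n -> 'I_n -> R) : R :=
  \sum_(x : 'I_n) \sum_(y : 'I_n)
     (if P x y == 0 then 0 else pi x * P x y * ln (P x y / Q x y)).

(* The partition O (0-indexed): singletons {x} for x < k-1, and the tail {x | k-1 <= x} *)
Definition O_partition (n k : nat) : {set {set 'I_n}} :=
  [set [set x] | x : 'I_n & (x < k.-1)%N] :|: [set [set x : 'I_n | (k.-1 <= x)%N]].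

From HB Require Import structures.
From mathcomp Require Import all_boot all_order all_algebra.
From mathcomp Require Import reals exp.
From mathcomp Require Import lra ring zify.
Import Order.TTheory GRing.Theory Num.Theory.
Local Open Scope ring_scope.

(* Since [G_C(x, y) / Pi(x, y) = 1 / pi(B)] on each block [B], the divergence
   [D(G_C || Pi)] is the entropy [- sum_B pi(B) ln pi(B)] of the block masses,
   so [O] must maximise [sum_B phi(pi(B))] with [phi t = t ln t].  Let [x] be
   the least point, hence of least mass.  In a partition with at least two
   blocks, take [x] out of its block [B0] and merge the rest of [B0] into
   another block [B1]: as [pi(x) <= pi(B0), pi(B1)], convexity of [phi]
   (the pair [pi(x), pi(B0) + pi(B1) - pi(x)] is more spread than
   [pi(B0), pi(B1)]) shows this does not decrease the sum, leaving [x] as a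
   singleton and a partition of the remaining points with one block fewer.
   Induction on the number of blocks yields [O]. *)

Section Xlnx.
Context {R : realType}.

Definition xlnx (t : R) := t * ln t.

Lemma ln_le_subr1 {t : R} : 0 < t -> ln t <= t - 1.
Proof. by move=> t0; have := @le_ln1Dx R (t - 1); rewrite addrCA subrr addr0; apply; lra. Qed.

Lemma xlnx_tangent {x y : R} : 0 < x -> 0 < y ->
  xlnx x + (y - x) * (ln x + 1) <= xlnx y.
Proof.
move=> x0 y0; have := ln_le_subr1 (divr_gt0 x0 y0).
rewrite ln_div ?posrE // -(ler_pM2l y0) mulrBr mulrBr mulr1 mulrCA divff ?gt_eqF //.
rewrite mulr1 /xlnx; nra.
Qed.

Lemma xlnx_spread {a b c : R} : 0 < c -> c <= a -> c <= b ->
  xlnx a + xlnx b <= xlnx c + xlnx (a + b - c).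
Proof.
wlog ab : a b / a <= b => [hwlog|] c0 ca cb.
  have [|/ltW ba] := leP a b; first by move=> ab; apply: hwlog.
  by rewrite addrC [a + b]addrC; apply: hwlog.
have [a0 b0 d0] : [/\ 0 < a, 0 < b & 0 < a + b - c] by split; lra.
have tc := xlnx_tangent a0 c0; have td := xlnx_tangent b0 d0.
have lnab : ln a <= ln b by rewrite ler_ln ?posrE.
have : 0 <= (a - c) * (ln b - ln a) by apply: mulr_ge0; lra.
nra.
Qed.

End Xlnx.

Section ExtractMerge.
Context {T : finType}.

Definition extract_merge (x : T) (B0 B1 : {set T}) (C : {set {set T}}) :=
  ((B0 :\ x) :|: B1) |: (C :\ B0 :\ B1).

Section Blocks.
Context {C : {set {set T}}} {S B0 B1 : {set T}} {x : T}.
Hypotheses (pC : partition C S) (B0C : B0 \in C) (B1C : B1 \in C) (B10 : B1 != B0).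
Hypothesis (xB0 : x \in B0).

Lemma extract_merge_disjoint : [disjoint B0 & B1].
Proof. by apply: (trivIsetP (partition_trivIset pC)) => //; rewrite eq_sym. Qed.

Lemma partition_extract_merge : partition (extract_merge x B0 B1 C) (S :\ x).
Proof.
have B1C' : B1 \in C :\ B0 by rewrite !inE B10.
have p2 := partitionD1 (partitionD1 pC B0C) B1C'.
have /set0Pn [y yB1] := partition_neq0 pC B1C.
have merged0 : (B0 :\ x) :|: B1 != set0.
  by apply/set0Pn; exists y; rewrite inE yB1 orbT.
have disj : [disjoint (B0 :\ x) :|: B1 & S :\: B0 :\: B1].
  rewrite -setI_eq0; apply/eqP/setP => z; rewrite !inE.
  by case: (z \in B0); case: (z \in B1); rewrite ?andbF.
have := partitionU1 p2 merged0 disj.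
suff -> : (B0 :\ x) :|: B1 :|: (S :\: B0 :\: B1) = S :\ x by [].
apply/setP => z; rewrite !inE.
have [->|_] /= := eqVneq z x.
  by rewrite xB0 (disjointFr extract_merge_disjoint xB0) /=.
have S0 := subsetP (partitionS pC B0C) z; have S1 := subsetP (partitionS pC B1C) z.
apply/idP/idP => [|zS]; first by case/orP => [/orP[/S0|/S1]|/and3P[]].
by rewrite zS; case: (z \in B0); case: (z \in B1).
Qed.

Lemma extract_merge_notin : (B0 :\ x) :|: B1 \notin C :\ B0 :\ B1.
Proof.
have /set0Pn [y yB1] := partition_neq0 pC B1C.
have tC := partition_trivIset pC.
have yB : y \in (B0 :\ x) :|: B1 by rewrite inE yB1 orbT.
apply/negP; rewrite !inE => /andP[nB1 /andP[_ BC]].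
by move: nB1; rewrite -(def_pblock tC BC yB) (def_pblock tC B1C yB1) eqxx.
Qed.

Lemma card_extract_merge : #|extract_merge x B0 B1 C| = #|C|.-1.
Proof.
rewrite cardsU1 extract_merge_notin (cardsD1 B0 C) B0C (cardsD1 B1 (C :\ B0)).
by rewrite !inE B10 B1C.
Qed.

End Blocks.
End ExtractMerge.

Section GibbsEntropy.
Context {R : realType} {n : nat} (pi : 'I_n -> R).
Hypothesis pi_pos : forall x, 0 < pi x.

Lemma pimassU (A B : {set 'I_n}) : [disjoint A & B] ->
  pimass pi (A :|: B) = pimass pi A + pimass pi B.
Proof. by move=> dAB; rewrite /pimass -bigU //; apply: eq_bigl => x; rewrite !inE. Qed.

Lemma pimassD1 {A : {set 'I_n}} {x} : x \in A -> pimass pi A = pi x + pimass pi (A :\ x).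
Proof. by move=> xA; rewrite /pimass (big_setD1 x xA). Qed.

Lemma pimass_ge_mem {A : {set 'I_n}} {x} : x \in A -> pi x <= pimass pi A.
Proof.
move=> xA; rewrite (pimassD1 xA) lerDl.
by apply: sumr_ge0 => y _; apply: ltW.
Qed.

Lemma pimass_gt0 {A : {set 'I_n}} {x} : x \in A -> 0 < pimass pi A.
Proof. by move=> xA; apply: (lt_le_trans (pi_pos x)); apply: pimass_ge_mem. Qed.

Lemma pimass_extract_merge (B0 B1 : {set 'I_n}) x : [disjoint B0 & B1] -> x \in B0 ->
  pimass pi ((B0 :\ x) :|: B1) = pimass pi B0 + pimass pi B1 - pi x.
Proof.
move=> dB xB0; rewrite pimassU ?(pimassD1 xB0); last exact: disjointWl (subD1set B0 x) dB.
ring.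
Qed.

Definition negentropy (P : {set {set 'I_n}}) := \sum_(B in P) xlnx (pimass pi B).

Lemma DKL_gibbs_row {P : {set {set 'I_n}}} {x} : x \in pblock P x ->
  \sum_y (if gibbs_kernel pi P x y == 0 then 0 else
     pi x * gibbs_kernel pi P x y * ln (gibbs_kernel pi P x y / Pi_kernel pi x y))
  = - (pi x * ln (pimass pi (pblock P x))).
Proof.
set B := pblock P x => xB; have mB := pimass_gt0 xB.
rewrite (bigID (mem B)) /= [X in _ + X]big1 ?addr0 => [|y /negbTE yB]; last first.
  by rewrite /gibbs_kernel -/B yB eqxx.
transitivity (\sum_(y in B) pi y * (- (pi x * ln (pimass pi B)) / pimass pi B)).
  apply: eq_bigr => y yB; rewrite /gibbs_kernel -/B yB /Pi_kernel.
  rewrite mulf_eq0 invr_eq0 !gt_eqF //= [pi y / _ / _]mulrAC divff ?gt_eqF // mul1r lnV ?posrE //.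
  by field; rewrite gt_eqF.
by rewrite -mulr_suml -/(pimass pi B) mulrCA divff ?gt_eqF ?mulr1.
Qed.

Lemma DKL_gibbs_Pi (P : {set {set 'I_n}}) : partition P [set: 'I_n] ->
  DKL pi (gibbs_kernel pi P) (Pi_kernel pi) = - negentropy P.
Proof.
move=> pP; have tP := partition_trivIset pP.
have xP x : x \in pblock P x by rewrite mem_pblock (cover_partition pP) inE.
rewrite /DKL; under eq_bigr => x _ do rewrite (DKL_gibbs_row (xP x)).
rewrite (eq_bigl (fun x => x \in [set: 'I_n])) => [|x]; last by rewrite inE.
rewrite (set_partition_big _ pP) /negentropy -sumrN; apply: eq_bigr => B BP.
rewrite /xlnx /pimass mulr_suml -sumrN; apply: eq_bigr => x xB.
by rewrite (def_pblock tP BP xB).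
Qed.

Lemma negentropy_extract_le {S : {set 'I_n}} {C : {set {set 'I_n}}} {x k} :
  partition C S -> #|C| = k.+2 -> x \in S -> (forall y, y \in S -> pi x <= pi y) ->
  exists2 C', partition C' (S :\ x) /\ #|C'| = k.+1 &
    negentropy C <= xlnx (pi x) + negentropy C'.
Proof.
move=> pC cC xS xmin; have covC := cover_partition pC.
pose B0 := pblock C x.
have B0C : B0 \in C by rewrite pblock_mem // covC.
have xB0 : x \in B0 by rewrite mem_pblock covC.
have cD : #|C :\ B0| = k.+1 by move: cC; rewrite (cardsD1 B0) B0C => -[].
have /set0Pn [B1] : C :\ B0 != set0 by rewrite -card_gt0 cD.
rewrite !inE => /andP[B10 B1C].
exists (extract_merge x B0 B1 C).
  by split; [exact: partition_extract_merge | rewrite (card_extract_merge pC) // cC].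
have dB := extract_merge_disjoint pC B0C B1C B10.
have /set0Pn [y yB1] := partition_neq0 pC B1C.
have xB1 : pi x <= pimass pi B1.
  apply: le_trans (pimass_ge_mem yB1); apply: xmin.
  exact: subsetP (partitionS pC B1C) y yB1.
have := xlnx_spread (pi_pos x) (pimass_ge_mem xB0) xB1.
rewrite -pimass_extract_merge // /negentropy big_setU1 ?(extract_merge_notin pC B1C) //=.
by rewrite (big_setD1 _ B0C) (big_setD1 B1) ?inE ?B10 //= !addrA lerD2r.
Qed.

Hypothesis pi_mono : forall i j : 'I_n, (i <= j)%N -> pi i <= pi j.

Definition tail_set j := [set x : 'I_n | (j <= x)%N].

Lemma tail_set0 : tail_set 0 = [set: 'I_n].
Proof. by apply/setP => x; rewrite !inE. Qed.

Lemma tail_setD1 (x : 'I_n) : tail_set x :\ x = tail_set x.+1.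
Proof. by apply/setP => y; rewrite !inE -val_eqE /=; lia. Qed.

(* [negentropy] of the partition of [tail_set j] into the singletons of
   [j, .., j + k - 1] and the block [tail_set (j + k)] *)
Definition tail_bound j k :=
  \sum_(x : 'I_n | (j <= x < j + k)%N) xlnx (pi x) + xlnx (pimass pi (tail_set (j + k))).

Lemma tail_boundS (x : 'I_n) k : tail_bound x k.+1 = xlnx (pi x) + tail_bound x.+1 k.
Proof.
rewrite /tail_bound (bigD1 x) /=; last lia.
rewrite addrA addSnnS; congr (_ + _ + _); apply: eq_bigl => y.
rewrite -val_eqE /=; lia.
Qed.

Lemma negentropy_le_tail_bound k j (C : {set {set 'I_n}}) :
  partition C (tail_set j) -> #|C| = k.+1 -> negentropy C <= tail_bound j k.
Proof.
elim: k j C => [|k IH] j C pC cC.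
  have /cards1P [B CB] : #|C| == 1%N by rewrite cC.
  move: pC; rewrite CB => /cover_partition; rewrite cover1 => ->.
  by rewrite /negentropy /tail_bound big_set1 big_pred0 ?add0r ?addn0 // => x; lia.
have [xj xjE] : exists xj : 'I_n, val xj = j.
  have /set0Pn [y] : tail_set j != set0.
    apply: contra_eqN cC => /eqP S0; move: pC.
    by rewrite S0 partition_set0 => /eqP->; rewrite cards0.
  rewrite inE => jy; have jn : (j < n)%N by have := ltn_ord y; lia.
  by exists (Ordinal jn).
subst j.
have xjS : xj \in tail_set xj by rewrite inE.
have xmin y : y \in tail_set xj -> pi xj <= pi y by rewrite inE; apply: pi_mono.
have [C' [pC' cC'] le] := negentropy_extract_le pC cC xjS xmin.
rewrite tail_setD1 in pC'.
by rewrite tail_boundS (le_trans le) // lerD2l IH.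
Qed.

Lemma O_partitionE k :
  O_partition n k = tail_set k.-1 |: [set [set x] | x : 'I_n & (x < k.-1)%N].
Proof. by rewrite /O_partition setUC. Qed.

Lemma partition_O_partition k : (k.-1 < n)%N -> partition (O_partition n k) [set: 'I_n].
Proof.
move=> kn; pose I := [set [set x] | x : 'I_n & (x < k.-1)%N].
pose D := [set x : 'I_n | (x < k.-1)%N].
have I0 : set0 \notin I by apply/imsetP => -[x _ /setP/(_ x)]; rewrite !inE eqxx.
have pI : partition I D.
  apply/and3P; split => //.
  - apply/eqP/setP => z; rewrite cover_imset; apply/bigcupP/idP.
      by case=> x; rewrite !inE => xk /eqP ->.
    by rewrite inE => zk; exists z; rewrite !inE.
  - have [] // := @trivIimset _ _ _ (fun x : 'I_n => [set x]) _ I0.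
    by move=> x y _ _ yx; rewrite disjoints1 inE eq_sym.
have T0 : tail_set k.-1 != set0 by apply/set0Pn; exists (Ordinal kn); rewrite inE.
have dTD : [disjoint tail_set k.-1 & D].
  by rewrite -setI_eq0; apply/eqP/setP => z; rewrite !inE; lia.
have := partitionU1 pI T0 dTD; rewrite -O_partitionE.
by congr partition; apply/setP => z; rewrite !inE; lia.
Qed.

Lemma negentropy_O_partition k : negentropy (O_partition n k) = tail_bound 0 k.-1.
Proof.
have TI : tail_set k.-1 \notin [set [set x] | x : 'I_n & (x < k.-1)%N].
  by apply/imsetP => -[x]; rewrite inE => xk /setP/(_ x); rewrite !inE eqxx; lia.
rewrite O_partitionE /negentropy big_setU1 //= big_imset /=; last first.
  by move=> x y _ _; apply: set1_inj.
rewrite addrC /tail_bound add0n; congr (_ + _); apply: eq_big => [x|x _]; first by rewrite inE.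
by rewrite /pimass big_set1.
Qed.

End GibbsEntropy.

Theorem proposition7p1 (R : realType) (n : nat) (pi : 'I_n -> R)
  (pi_pos : forall x, 0 < pi x)
  (pi_sum : \sum_(x : 'I_n) pi x = 1)
  (pi_mono : forall i j : 'I_n, (i <= j)%N -> pi i <= pi j)
  (k : nat) (hk1 : (1 <= k)%N) (hkn : (k <= n)%N)
  (C : {set {set 'I_n}}) (hC : partition C [set: 'I_n]) (hCk : #|C| = k) :
  DKL pi (gibbs_kernel pi (O_partition n k)) (Pi_kernel pi)
  <= DKL pi (gibbs_kernel pi C) (Pi_kernel pi).
Proof.
have pO : partition (O_partition n k) [set: 'I_n] by apply: partition_O_partition; lia.
rewrite !DKL_gibbs_Pi // lerN2 negentropy_O_partition.
case: k hk1 hkn hCk {pO} => // k _ _ hCk.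
by apply: negentropy_le_tail_bound; rewrite ?tail_set0.
Qed.
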